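(* Let $\mathfrak l$ be a real finite-dimensional nilpotent Lie algebra with $\dim\mathfrak l'=2$ and $\mathfrak l'\subset\mathfrak z(\mathfrak l)$, let $X_1,X_2,X_3\in\mathfrak l$ and let $Y,Z$ be a basis of $\mathfrak l'$ such that $[X_1,X_2]=Y$, $[X_1,X_3]=Z$, $[X_2,X_3]=0$. Let $\mathfrak a$ be a semisimple orthogonal $\mathfrak l$-module and let $(\alpha,\gamma)\in\mathcal Z^2_Q(\mathfrak l,\mathfrak a)$ with $\alpha(\mathfrak l,\mathfrak l)\subset\mathfrak a^{\mathfrak l}$. Then: (i) $\alpha(Y,Z)=0$; (ii) $\alpha(Y,L)=0$ for all $L\in\mathfrak l$ with $[L,X_1]=[L,X_2]=0$; (iii) $\alpha(Z,L)=0$ for all $L\in\mathfrak l$ with $[L,X_1]=[L,X_3]=0$; (iv) $\langle\alpha(U_1,L_1),\alpha(U_2,L_2)\rangle=\langle\alpha(U_1,L_2),\alpha(U_2,L_1)\rangle$ for all $U_1,U_2\in\mathfrak l'$ and $L_1,L_2\in\mathfrak l$.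
   Context: $\mathfrak l'=[\mathfrak l,\mathfrak l]$, $\mathfrak z(\mathfrak l)$ the centre. An orthogonal $\mathfrak l$-module is a finite-dimensional real vector space $\mathfrak a$ with a nondegenerate symmetric bilinear form $\langle\cdot,\cdot\rangle$ and a representation of $\mathfrak l$ by skew-adjoint maps; $\mathfrak a^{\mathfrak l}$ denotes the invariants. $C^p(\mathfrak l,\mathfrak a)$ are alternating $p$-linear maps with the Chevalley–Eilenberg differential $d$, $C^p(\mathfrak l)=C^p(\mathfrak l,\mathbb R)$; $\langle\alpha\wedge\alpha\rangle\in C^4(\mathfrak l)$ is the wedge product of $\alpha$ with itself followed by contraction with $\langle\cdot,\cdot\rangle$. $\mathcal Z^2_Q(\mathfrak l,\mathfrak a)=\{(\alpha,\gamma)\in C^2(\mathfrak l,\mathfrak a)\oplus C^3(\mathfrak l): d\alpha=0,\ d\gamma=\frac12\langle\alpha\wedge\alpha\rangle\}$. *)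

From HB Require Import structures.
From mathcomp Require Import all_boot all_order all_algebra.
From mathcomp Require Import reals.
Set Implicit Arguments. Unset Strict Implicit. Unset Printing Implicit Defensive.
Import Order.TTheory GRing.Theory Num.Theory.
Local Open Scope ring_scope.

Section Defs.
Variable R : realType.

Section Lie.
Variable L : vectType R.
Variable br : L -> L -> L.

Definition is_lie_bracket : Prop :=
  [/\ (forall (a : R) x y z, br (a *: x + y) z = a *: br x z + br y z),
      (forall (a : R) x y z, br z (a *: x + y) = a *: br z x + br z y),
      (forall x, br x x = 0) &
      (forall x y z, br x (br y z) + br y (br z x) + br z (br x y) = 0)].

(* nilpotent: all iterated brackets [x_1,[x_2,...,[x_n,y]...]] of length n vanish *)
Definition lie_nilpotent : Prop :=
  exists n : nat, forall (s : seq L) (y : L), size s = n -> foldr br y s = 0.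

Definition in_derived (u : L) : Prop :=
  exists s : seq (L * L), u = \sum_(p <- s) br p.1 p.2.

Definition derived_in_centre : Prop :=
  forall u, in_derived u -> forall w, br u w = 0.

Definition derived_basis (Y Z : L) : Prop :=
  [/\ in_derived Y, in_derived Z, free [:: Y; Z] &
      forall u, in_derived u -> exists a b : R, u = a *: Y + b *: Z].
End Lie.

Section Module.
Variables (L : vectType R) (br : L -> L -> L).
Variable A : vectType R.
Variable form : A -> A -> R.
Variable rho : L -> A -> A.

Definition is_orth_form : Prop :=
  [/\ (forall (c : R) u v w, form (c *: u + v) w = c * form u w + form v w),
      (forall u v, form u v = form v u) &
      (forall u, (forall v, form u v = 0) -> u = 0)].

Definition is_representation : Prop :=
  [/\ (forall (c : R) x y v, rho (c *: x + y) v = c *: rho x v + rho y v),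
      (forall (c : R) x u v, rho x (c *: u + v) = c *: rho x u + rho x v) &
      (forall x y v, rho (br x y) v = rho x (rho y v) - rho y (rho x v))].

Definition skew_adjoint_rep : Prop :=
  forall x u v, form (rho x u) v = - form u (rho x v).

Definition orthogonal_module : Prop :=
  [/\ is_orth_form, is_representation & skew_adjoint_rep].

Definition invariant_subspace (U : {vspace A}) : Prop :=
  forall x u, u \in U -> rho x u \in U.

Definition semisimple_module : Prop :=
  forall U : {vspace A}, invariant_subspace U ->
    exists W : {vspace A}, [/\ invariant_subspace W, (U :&: W = 0)%VS &
                               (U + W = fullv)%VS].

Definition is_invariant (v : A) : Prop := forall x, rho x v = 0.
End Module.

Section Cochains.
Variables (L : vectType R) (br : L -> L -> L).
Variables (A : vectType R) (form : A -> A -> R) (rho : L -> A -> A).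

Definition is_2cochain (alpha : L -> L -> A) : Prop :=
  [/\ (forall (c : R) x y z, alpha (c *: x + y) z = c *: alpha x z + alpha y z),
      (forall (c : R) x y z, alpha z (c *: x + y) = c *: alpha z x + alpha z y) &
      (forall x, alpha x x = 0)].

Definition is_3cochain (gamma : L -> L -> L -> R) : Prop :=
  [/\ (forall (c : R) x y z w, gamma (c *: x + y) z w = c * gamma x z w + gamma y z w),
      (forall (c : R) x y z w, gamma z (c *: x + y) w = c * gamma z x w + gamma z y w),
      (forall (c : R) x y z w, gamma z w (c *: x + y) = c * gamma z w x + gamma z w y),
      (forall x y, gamma x x y = 0) &
      [/\ (forall x y, gamma x y x = 0) & (forall x y, gamma y x x = 0)]].

(* Chevalley-Eilenberg differential of a 2-cochain *)
Definition d2 (alpha : L -> L -> A) (x0 x1 x2 : L) : A :=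
  rho x0 (alpha x1 x2) - rho x1 (alpha x0 x2) + rho x2 (alpha x0 x1)
  - alpha (br x0 x1) x2 + alpha (br x0 x2) x1 - alpha (br x1 x2) x0.

(* Chevalley-Eilenberg differential of a real 3-cochain (trivial coefficients) *)
Definition d3 (gamma : L -> L -> L -> R) (x0 x1 x2 x3 : L) : R :=
  - gamma (br x0 x1) x2 x3 + gamma (br x0 x2) x1 x3 - gamma (br x0 x3) x1 x2
  - gamma (br x1 x2) x0 x3 + gamma (br x1 x3) x0 x2 - gamma (br x2 x3) x0 x1.

(* <alpha /\ alpha>: sum over (2,2)-shuffles sigma of
   sgn(sigma) <alpha(x_s1,x_s2), alpha(x_s3,x_s4)> *)
Definition wedge_form (alpha : L -> L -> A) (x0 x1 x2 x3 : L) : R :=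
    form (alpha x0 x1) (alpha x2 x3) - form (alpha x0 x2) (alpha x1 x3)
  + form (alpha x0 x3) (alpha x1 x2) + form (alpha x1 x2) (alpha x0 x3)
  - form (alpha x1 x3) (alpha x0 x2) + form (alpha x2 x3) (alpha x0 x1).

Definition in_Z2Q (alpha : L -> L -> A) (gamma : L -> L -> L -> R) : Prop :=
  [/\ is_2cochain alpha, is_3cochain gamma,
      (forall x0 x1 x2, d2 alpha x0 x1 x2 = 0) &
      (forall x0 x1 x2 x3, d3 gamma x0 x1 x2 x3 = 2^-1 * wedge_form alpha x0 x1 x2 x3)].
End Cochains.
End Defs.

From HB Require Import structures.
From mathcomp Require Import all_boot all_order all_algebra.
From mathcomp Require Import reals lra.
Import Order.TTheory GRing.Theory Num.Theory.
Local Open Scope ring_scope.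

Set Implicit Arguments. Unset Strict Implicit.

(* Since alpha takes invariant values, the cocycle identity d alpha = 0 loses
   its action terms and expresses alpha([x, y], w) through alpha([w, y], x) and
   alpha([w, x], y); both vanish when w commutes with x and y, which gives
   (i)-(iii) because l' is central.  For (iv), evaluate
   d gamma = 1/2 <alpha /\ alpha> at (U1, U2, L1, L2): every bracket involving
   U1 or U2 vanishes, so the left side reduces to -gamma([L1, L2], U1, U2),
   which is zero because gamma is alternating and its three arguments lie in
   the plane l'; on the right only the two mixed terms survive, by (i). *)

Section LinearMaps.
Variables (R : pzRingType) (U V : lmodType R) (f : U -> V).
Hypothesis f_lin : linear f.

Lemma linear_map0 : f 0 = 0.
Proof.
have := f_lin 1 0 0; rewrite !scale1r addr0 => f0_double.
by apply: (addrI (f 0)); rewrite addr0 -f0_double.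
Qed.

Lemma linear_mapD x y : f (x + y) = f x + f y.
Proof. by have := f_lin 1 x y; rewrite !scale1r. Qed.

Lemma linear_mapZ c x : f (c *: x) = c *: f x.
Proof. by have := f_lin c x 0; rewrite !addr0 linear_map0 addr0. Qed.

End LinearMaps.

Section InvariantCocycle.
Variables (R : realType) (L A : vectType R) (br : L -> L -> L).
Variables (rho : L -> A -> A) (alpha : L -> L -> A).
Hypothesis alpha_linl : forall y, linear (alpha^~ y).
Hypothesis alpha_closed : forall x0 x1 x2, d2 br rho alpha x0 x1 x2 = 0.
Hypothesis alpha_invariant : forall x y, is_invariant rho (alpha x y).

Lemma invariant_cocycle_bracket x y w :
  alpha (br x y) w = alpha (br w y) x - alpha (br w x) y.
Proof.
have rho_alpha z x' y' : rho z (alpha x' y') = 0 := alpha_invariant x' y' z.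
have /eqP := alpha_closed w x y.
by rewrite /d2 !rho_alpha subrr addr0 sub0r subr_eq0 addrC => /eqP.
Qed.

Lemma invariant_cocycle_commuting x y w :
  br w x = 0 -> br w y = 0 -> alpha (br x y) w = 0.
Proof.
move=> wx wy; have alpha0l z : alpha 0 z = 0 := linear_map0 (alpha_linl z).
by rewrite invariant_cocycle_bracket wx wy !alpha0l subrr.
Qed.

Lemma invariant_cocycle_derived u v :
  in_derived br u -> (forall x, br v x = 0) -> alpha u v = 0.
Proof.
move=> [s ->] v_central.
rewrite (big_morph (alpha^~ v) (linear_mapD (alpha_linl v)) (linear_map0 (alpha_linl v))).
by apply: big1 => p _; apply: invariant_cocycle_commuting.
Qed.

End InvariantCocycle.

Lemma is_3cochain_span2_eq0 (R : realType) (L : vectType R)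
    (gamma : L -> L -> L -> R) (Y Z : L) (a1 b1 a2 b2 a3 b3 : R) :
  is_3cochain gamma ->
  gamma (a1 *: Y + b1 *: Z) (a2 *: Y + b2 *: Z) (a3 *: Y + b3 *: Z) = 0.
Proof.
case=> g1 g2 g3 gxxy [gxyx gyxx].
(* In the regular module R^o, [c *: r] is [c * r], so scalar maps are linear maps. *)
have gZ1 c x y z : gamma (c *: x) y z = c * gamma x y z.
  exact: (linear_mapZ (f := fun x => gamma x y z : R^o) (fun c x x' => g1 c x x' y z)).
have gZ2 c x y z : gamma y (c *: x) z = c * gamma y x z.
  exact: (linear_mapZ (f := fun x => gamma y x z : R^o) (fun c x x' => g2 c x x' y z)).
have gZ3 c x y z : gamma y z (c *: x) = c * gamma y z x.
  exact: (linear_mapZ (f := fun x => gamma y z x : R^o) (fun c x x' => g3 c x x' y z)).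
rewrite !g1 !g2 !g3 !gZ1 !gZ2 !gZ3 !gxxy !gxyx !gyxx.
lra.
Qed.

Lemma Z2Q_central_exchange (R : realType) (L A : vectType R) (br : L -> L -> L)
    (form : A -> A -> R) (rho : L -> A -> A) (alpha : L -> L -> A)
    (gamma : L -> L -> L -> R) (U1 U2 L1 L2 : L) :
  in_Z2Q br form rho alpha gamma -> is_orth_form form ->
  (forall x, br U1 x = 0) -> (forall x, br U2 x = 0) ->
  alpha U1 U2 = 0 -> gamma (br L1 L2) U1 U2 = 0 ->
  form (alpha U1 L1) (alpha U2 L2) = form (alpha U1 L2) (alpha U2 L1).
Proof.
move=> [_ [g1 _ _ _ _] _ d3_wedge] [f1 fsym _] U1_central U2_central a12 g12.
have gamma0 y z : gamma 0 y z = 0.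
  exact: (linear_map0 (f := fun x => gamma x y z : R^o) (fun c x x' => g1 c x x' y z)).
have form0l v : form 0 v = 0.
  exact: (linear_map0 (f := fun u => form u v : R^o) (fun c u u' => f1 c u u' v)).
have form0r v : form v 0 = 0 by rewrite fsym form0l.
have := d3_wedge U1 U2 L1 L2.
rewrite /d3 /wedge_form !U1_central !U2_central !gamma0 g12 a12 form0l form0r.
have := fsym (alpha U2 L1) (alpha U1 L2); have := fsym (alpha U2 L2) (alpha U1 L1).
lra.
Qed.

Theorem lemma2 (R : realType) (L : vectType R) (br : L -> L -> L)
  (A : vectType R) (form : A -> A -> R) (rho : L -> A -> A)
  (X1 X2 X3 Y Z : L) (alpha : L -> L -> A) (gamma : L -> L -> L -> R) :
  is_lie_bracket br ->
  lie_nilpotent br ->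
  derived_in_centre br ->
  derived_basis br Y Z ->
  br X1 X2 = Y -> br X1 X3 = Z -> br X2 X3 = 0 ->
  orthogonal_module br form rho ->
  semisimple_module rho ->
  in_Z2Q br form rho alpha gamma ->
  (forall x y, is_invariant rho (alpha x y)) ->
  [/\ alpha Y Z = 0,
      (forall W, br W X1 = 0 -> br W X2 = 0 -> alpha Y W = 0),
      (forall W, br W X1 = 0 -> br W X3 = 0 -> alpha Z W = 0) &
      (forall U1 U2 L1 L2, in_derived br U1 -> in_derived br U2 ->
         form (alpha U1 L1) (alpha U2 L2) = form (alpha U1 L2) (alpha U2 L1))].
Proof.
move=> _ _ centre [Y_der Z_der _ derived_span] eY eZ _ [orth _ _] _ Z2Q inv.
have [[alpha_lin _ _] gamma_coc closed _] := Z2Q.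
have alpha_linl y : linear (alpha^~ y) by move=> c x x'; exact: alpha_lin.
have alpha_derived u v : in_derived br u -> in_derived br v -> alpha u v = 0.
  by move=> du dv; apply: invariant_cocycle_derived (centre v dv).
split.
- exact: alpha_derived.
- by move=> W W1 W2; rewrite -eY (invariant_cocycle_commuting alpha_linl closed inv).
- by move=> W W1 W3; rewrite -eZ (invariant_cocycle_commuting alpha_linl closed inv).
move=> U1 U2 L1 L2 dU1 dU2.
apply: (Z2Q_central_exchange Z2Q orth (centre _ dU1) (centre _ dU2)).
  exact: alpha_derived.
have dL : in_derived br (br L1 L2) by exists [:: (L1, L2)]; rewrite big_seq1.
have [a1 [b1 ->]] := derived_span _ dL.
have [a2 [b2 ->]] := derived_span _ dU1.
have [a3 [b3 ->]] := derived_span _ dU2.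
exact: is_3cochain_span2_eq0.
Qed.
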